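(* With $f(n)$ the number of partitions of $n$ having a fixed hook (and $f(0)=0$), $$\sum_{n\ge0} f(n)q^n=\sum_{T=0}^\infty \frac{q^{(T+1)^2}}{(q;q)_T\,(q^{T+2};q)_\infty}=\sum_{T=0}^\infty \frac{q^{(T+1)^2}(1-q^{T+1})}{(q;q)_\infty}$$ as formal power series in $q$.
   Context: A partition $\lambda=(\lambda_1\ge\cdots\ge\lambda_t>0)$ of $n$ has first-column hook lengths $h_{i,1}(\lambda)=\lambda_i+(t-i)$, $1\le i\le t$. $\lambda$ has a fixed hook if $h_{i,1}(\lambda)=i$ for some $i$. Notation: $(a;q)_\infty=\prod_{j\ge0}(1-aq^j)$, $(a;q)_n=\prod_{j=0}^{n-1}(1-aq^j)$. *)

From mathcomp Require Import all_boot all_order all_algebra.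
Set Implicit Arguments. Unset Strict Implicit. Unset Printing Implicit Defensive.
Import Order.TTheory GRing.Theory Num.Theory.
Local Open Scope ring_scope.

Definition is_partition (n : nat) (s : seq nat) : bool :=
  [&& sorted geq s, all (fun x => 0 < x)%N s & sumn s == n].

(* First-column hook length h_{i,1} = lambda_i + (t - i), 1 <= i <= t.
   With 0-based index k = i - 1 : h = nth 0 s k + (t - (k+1)). *)
Definition hook1 (s : seq nat) (k : nat) : nat := (nth 0 s k + (size s - k.+1))%N.

Definition has_fixed_hook (s : seq nat) : bool :=
  has (fun k => hook1 s k == k.+1) (iota 0 (size s)).

(* Partitions of n are encoded injectively as n-tuples of parts in [0, n],
   weakly decreasing, padded by zeros (a partition of n has at most n parts). *)
Definition positive_parts (n : nat) (t : n.-tuple 'I_n.+1) : seq nat :=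
  filter (fun x => 0 < x)%N [seq (val x : nat) | x <- t].

Definition f (n : nat) : nat :=
  #|[set t : n.-tuple 'I_n.+1 |
      [&& sorted geq [seq (val x : nat) | x <- t],
          is_partition n (positive_parts t)
        & has_fixed_hook (positive_parts t)]]|.

Definition fps := nat -> int.

Definition fps_of_poly (p : {poly int}) : fps := fun n => p`_n.

Definition fmul (a b : fps) : fps :=
  fun n => \sum_(i < n.+1) a i * b (n - i)%N.

(* Multiplicative inverse of a series with constant term 1:
   b_0 = 1, b_(m+1) = - sum_(k=1)^(m+1) a_k b_(m+1-k). *)
Fixpoint finv_seq (a : fps) (n : nat) : seq int :=
  match n with
  | 0 => [:: 1]
  | m.+1 => let s := finv_seq a m in
            rcons s (- \sum_(i < m.+1) a i.+1 * nth 0 s (m - i)%N)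
  end.
Definition finv (a : fps) : fps := fun n => nth 0 (finv_seq a n) n.

Definition qpoch_fin (T : nat) : {poly int} := \prod_(j < T) (1 - 'X^(j.+1)).

(* (q^m;q)_oo = prod_(j>=0) (1 - q^(m+j)) for m >= 1, as the q-adic limit of
   its partial products: the coefficient of q^n is already attained by the
   partial product over j < n+1 (all later factors are 1 + O(q^(n+1))). *)
Definition qpoch_inf (m : nat) : fps :=
  fun n => (\prod_(j < n.+1) (1 - 'X^(m + j)) : {poly int})`_n.

(* q-adically convergent sum sum_(T>=0) F T, for families where F T = O(q^(T+1))
   (so only T <= n contributes to the coefficient of q^n). *)
Definition fsum (F : nat -> fps) : fps := fun n => \sum_(T < n.+1) F T n.

Definition term1 (T : nat) : fps :=
  fmul (fps_of_poly 'X^((T.+1) ^ 2))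
       (finv (fmul (fps_of_poly (qpoch_fin T)) (qpoch_inf T.+2))).

Definition term2 (T : nat) : fps :=
  fmul (fps_of_poly ('X^((T.+1) ^ 2) * (1 - 'X^(T.+1)))) (finv (qpoch_inf 1)).

(* A partition with t parts has a fixed hook in row i iff lambda_i = 2i - t, and
   in at most one row, since the first-column hook lengths strictly decrease.
   Writing i = T+k+1 and lambda_i = T+1 (so t = T+1+2k), the rows above i, minus
   T+1, form a partition into at most T+k parts, and the rows below, minus 1, one
   into at most k parts of size at most T.  Hence the partitions of this shape
   have generating function
     q^((T+1)(T+1+k)+k) / (q;q)_(T+k) * [T+k choose k]_q
       = q^((T+1)^2) / (q;q)_T * q^(k(T+2)) / (q;q)_k,
   and summing over k with Euler's identity sum_k z^k / (q;q)_k = 1 / (z;q)_oo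
   at z = q^(T+2) gives the T-th term of the first sum.  The second sum follows
   from (q;q)_T (1 - q^(T+1)) (q^(T+2);q)_oo = (q;q)_oo.  All identities between
   series are proved coefficientwise, as identities of polynomials mod q^N. *)

From mathcomp Require Import all_boot all_order all_algebra zify ring.
Unset Printing Implicit Defensive.
Import Order.TTheory GRing.Theory Num.Theory.
Local Open Scope ring_scope.

Section TruncatedEquality.
Context {R : comNzRingType}.
Implicit Types p q r u v w : {poly R}.

Definition eqXn (N : nat) p q := forall i, (i < N)%N -> p`_i = q`_i.
Arguments eqXn : simpl never.

Lemma eqXn_sym N p q : eqXn N p q -> eqXn N q p.
Proof. by move=> h i hi; rewrite h. Qed.

Lemma eqXn_trans N p q r : eqXn N p q -> eqXn N q r -> eqXn N p r.
Proof. by move=> h1 h2 i hi; rewrite h1 // h2. Qed.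

Lemma eqXnD N p q p' q' : eqXn N p p' -> eqXn N q q' -> eqXn N (p + q) (p' + q').
Proof. by move=> h1 h2 i hi; rewrite !coefD h1 // h2. Qed.

Lemma eqXnB N p q p' q' : eqXn N p p' -> eqXn N q q' -> eqXn N (p - q) (p' - q').
Proof. by move=> h1 h2 i hi; rewrite !coefB h1 // h2. Qed.

Lemma eqXnM N p q p' q' : eqXn N p p' -> eqXn N q q' -> eqXn N (p * q) (p' * q').
Proof.
move=> h1 h2 i hi; rewrite !coefM; apply: eq_bigr => j _.
by rewrite h1 ?h2 //; apply: leq_ltn_trans hi; rewrite ?leq_subr // -ltnS.
Qed.

Lemma eqXnMl N r p q : eqXn N p q -> eqXn N (r * p) (r * q).
Proof. exact: eqXnM. Qed.

Lemma eqXnMr N r p q : eqXn N p q -> eqXn N (p * r) (q * r).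
Proof. by move/eqXnM; apply. Qed.

Lemma eqXn_sum N (I : Type) (s : seq I) (P : pred I) (F G : I -> {poly R}) :
  (forall x, P x -> eqXn N (F x) (G x)) ->
  eqXn N (\sum_(x <- s | P x) F x) (\sum_(x <- s | P x) G x).
Proof. by move=> h i hi; rewrite !coef_sum; apply: eq_bigr => x Px; apply: h. Qed.

Lemma eqXn_mulXn0 N e p : (N <= e)%N -> eqXn N ('X^e * p) 0.
Proof. by move=> he i hi; rewrite coefXnM coef0 (leq_trans hi he). Qed.

Lemma eqXn_1subXn N e : (N <= e)%N -> eqXn N (1 - 'X^e) 1.
Proof. by move=> he i hi; rewrite coefB coefXn ltn_eqF ?subr0 // (leq_trans hi he). Qed.

Lemma eqXn_inv_uniq N u v w : eqXn N (u * v) 1 -> eqXn N (u * w) 1 -> eqXn N v w.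
Proof.
move=> uv1 uw1; have := eqXnMr _ w _ _ uv1; rewrite mul1r -mulrA mulrCA.
apply: eqXn_trans; rewrite -[v in eqXn _ v]mulr1.
by apply/eqXnMl/eqXn_sym.
Qed.

End TruncatedEquality.

Arguments eqXn_trans {R N p q r}.
Arguments eqXn_sym {R N p q}.
Arguments eqXnD {R N p q p' q'}.
Arguments eqXnB {R N p q p' q'}.
Arguments eqXnM {R N p q p' q'}.
Arguments eqXnMl {R N} r {p q}.
Arguments eqXnMr {R N} r {p q}.
Arguments eqXn_inv_uniq {R N u v w}.

Section Series.
Implicit Types (a b : fps) (p c : {poly int}).

Definition trunc a N : {poly int} := \poly_(i < N) a i.

Lemma coef_trunc a N i : (i < N)%N -> (trunc a N)`_i = a i.
Proof. by move=> hi; rewrite coef_poly hi. Qed.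

Lemma trunc_fps_of_poly p N : eqXn N (trunc (fps_of_poly p) N) p.
Proof. by move=> i hi; rewrite coef_trunc. Qed.

Lemma trunc_fmul a b N : eqXn N (trunc (fmul a b) N) (trunc a N * trunc b N).
Proof.
move=> i hi; rewrite coef_trunc // coefM; apply: eq_bigr => j _.
by rewrite !coef_trunc //; apply: leq_ltn_trans hi; rewrite ?leq_subr // -ltnS.
Qed.

Lemma size_finv_seq a n : size (finv_seq a n) = n.+1.
Proof. by elim: n => [|n IH] //=; rewrite size_rcons IH. Qed.

Lemma nth_finv_seq a m j : (j <= m)%N -> nth 0 (finv_seq a m) j = finv a j.
Proof.
elim: m => [|m IH]; first by rewrite leqn0 => /eqP->.
rewrite leq_eqVlt => /predU1P[-> //|hj].
by rewrite /= nth_rcons size_finv_seq hj IH.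
Qed.

Lemma finvS a m : finv a m.+1 = - \sum_(i < m.+1) a i.+1 * finv a (m - i)%N.
Proof.
rewrite /finv /= nth_rcons size_finv_seq ltnn eqxx; congr (- _).
by apply: eq_bigr => i _; rewrite nth_finv_seq // leq_subr.
Qed.

Lemma trunc_mul_finv a N : a 0%N = 1 -> eqXn N (trunc a N * trunc (finv a) N) 1.
Proof.
move=> a0 i hi; rewrite -(trunc_fmul a (finv a) N i hi) coef_trunc // coef1 /fmul.
case: i hi => [|m] _; first by rewrite big_ord1 a0 mul1r.
rewrite big_ord_recl a0 mul1r subn0 finvS /= addrC; apply/eqP; rewrite subr_eq0.
by apply/eqP/eq_bigr => i _; rewrite subSS.
Qed.

Lemma coef_fmul_finv p a c N n : a 0%N = 1 -> eqXn N (trunc a N * c) p ->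
  (n < N)%N -> fmul (fps_of_poly p) (finv a) n = c`_n.
Proof.
move=> a0 ac_p hn; set v := trunc (finv a) N.
have c_pv : eqXn N c (p * v).
  apply: eqXn_trans (_ : eqXn N c (trunc a N * c * v)) (eqXnMr v ac_p).
  have -> : trunc a N * c * v = c * (trunc a N * v) by ring.
  by rewrite -[c in eqXn _ c]mulr1; apply/eqXnMl/eqXn_sym/trunc_mul_finv.
rewrite -(coef_trunc _ _ _ hn) (trunc_fmul _ _ _ _ hn) (eqXnMr v (trunc_fps_of_poly p N) _ hn).
by rewrite c_pv.
Qed.

End Series.

Definition qpoch (m M : nat) : {poly int} := \prod_(j < M) (1 - 'X^(m + j)).

Lemma qpoch_fin_qpoch T : qpoch_fin T = qpoch 1 T.
Proof. by apply: eq_bigr => j _; rewrite add1n. Qed.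

Lemma qpoch_finS T : qpoch_fin T.+1 = qpoch_fin T * (1 - 'X^(T.+1)).
Proof. by rewrite /qpoch_fin big_ord_recr. Qed.

Lemma qpochD m M1 M2 : qpoch m (M1 + M2) = qpoch m M1 * qpoch (m + M1) M2.
Proof. by rewrite /qpoch big_split_ord; congr (_ * _); apply: eq_bigr => j _; rewrite addnA. Qed.

Lemma eqXn_qpoch1 N m M : (N <= m)%N -> eqXn N (qpoch m M) 1.
Proof.
move=> Nm; elim: M => [|M IH]; first by rewrite /qpoch big_ord0.
rewrite /qpoch big_ord_recr /= -/(qpoch m M) -[X in eqXn _ _ X]mulr1.
by apply: eqXnM IH (eqXn_1subXn _ _ _); apply: leq_trans Nm (leq_addr _ _).
Qed.

Lemma eqXn_qpoch N M m : (N <= M)%N -> eqXn N (qpoch m M) (qpoch m N).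
Proof.
move=> NM; rewrite -(subnKC NM) qpochD -[X in eqXn _ _ X]mulr1.
by apply/eqXnMl/eqXn_qpoch1/leq_addl.
Qed.

Lemma trunc_qpoch_inf m N : eqXn N (trunc (qpoch_inf m) N) (qpoch m N).
Proof. by move=> i hi; rewrite coef_trunc // (eqXn_qpoch _ _ m hi i (ltnSn i)). Qed.

Lemma qpoch_coef0 m M : (0 < m)%N -> (qpoch m M)`_0 = 1.
Proof. by move=> m0; rewrite (eqXn_qpoch1 1 m M m0 0 isT) coef1. Qed.

Lemma term1_coef T N c n :
  eqXn N (qpoch_fin T * qpoch T.+2 N * c) 'X^(T.+1 ^ 2) -> (n < N)%N ->
  term1 T n = c`_n.
Proof.
move=> hc; apply: coef_fmul_finv.
  rewrite /fmul big_ord1 /=.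
  by rewrite -[qpoch_inf _ _]/((qpoch T.+2 1)`_0) /fps_of_poly qpoch_fin_qpoch !qpoch_coef0.
apply: eqXn_trans (eqXnMr c (trunc_fmul _ _ N)) _.
apply: eqXn_trans (eqXnMr c (eqXnM (trunc_fps_of_poly _ N) (trunc_qpoch_inf _ N))) hc.
Qed.

(* (q;q)_(T+1) (q^(T+2);q)_N = (q;q)_(T+N+1), which agrees with (q;q)_N mod q^N. *)
Lemma term2_coef T N c n :
  eqXn N (qpoch_fin T * qpoch T.+2 N * c) 'X^(T.+1 ^ 2) -> (n < N)%N ->
  term2 T n = c`_n.
Proof.
move=> hc; apply: coef_fmul_finv.
  by rewrite -[qpoch_inf _ _]/((qpoch 1 1)`_0) qpoch_coef0.
apply: eqXn_trans (eqXnMr c (trunc_qpoch_inf _ N)) _.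
apply: eqXn_trans (eqXnMr c (eqXn_sym (eqXn_qpoch _ _ 1 (leq_addl T.+1 N)))) _.
rewrite qpochD -qpoch_fin_qpoch qpoch_finS mulrC.
have -> : c * (qpoch_fin T * (1 - 'X^(T.+1)) * qpoch T.+2 N) =
  (1 - 'X^(T.+1)) * (qpoch_fin T * qpoch T.+2 N * c) by ring.
by rewrite [_ * (1 - _)]mulrC; apply: eqXnMl.
Qed.

Section DecreasingSequences.
Local Open Scope nat_scope.

(* The weakly decreasing sequences of length L with entries at most a: those
   ending with 0, and those with all entries positive (shifted down by one). *)
Fixpoint decseqs (L : nat) : nat -> seq (seq nat) :=
  match L with
  | 0 => fun _ => [:: [::]]
  | L'.+1 => fix decseqsL a := match a with
        | 0 => [:: nseq L'.+1 0]
        | a'.+1 => [seq rcons s 0 | s <- decseqs L' a'.+1] ++ [seq map S s | s <- decseqsL a']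
        end
  end.

Definition is_decseq L a (s : seq nat) :=
  [&& size s == L, pairwise geq s & all (fun x => x <= a) s].

Lemma decseqsSS L a : decseqs L.+1 a.+1 =
  [seq rcons s 0 | s <- decseqs L a.+1] ++ [seq map S s | s <- decseqs L.+1 a].
Proof. by []. Qed.

Lemma pairwise_nseq n x : pairwise geq (nseq n x).
Proof. by elim: n => //= n ->; rewrite all_nseq /= leqnn orbT. Qed.

Lemma mem_decseqs L a s : (s \in decseqs L a) = is_decseq L a s.
Proof.
elim: L a s => [|L IHL] a s; first by rewrite inE /is_decseq; case: s.
elim: a s => [|a IHa] s.
  rewrite inE /is_decseq; apply/eqP/idP => [->|/and3P[/eqP sz _ a0]].
    by rewrite size_nseq eqxx pairwise_nseq all_nseq.
  have /all_pred1P : all (pred1 0) s by apply: sub_all a0 => x; rewrite leqn0.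
  by rewrite sz.
rewrite decseqsSS mem_cat; apply/orP/idP => [[] /mapP[x hx ->]|].
- move: hx; rewrite IHL => /and3P[/eqP sz pw al].
  by rewrite /is_decseq size_rcons sz eqxx pairwise_rcons pw all_rcons al !andbT; apply/allP.
- move: hx; rewrite IHa => /and3P[/eqP sz pw al].
  by rewrite /is_decseq size_map sz eqxx pairwise_map all_map pw; apply: (sub_all _ al) => y.
move=> /and3P[/eqP sz pw al].
case/lastP: s sz pw al => [|x y] //; rewrite size_rcons => -[sz] pw al.
have /andP[/andP[ally pwx] /andP[alx ya]] : (all (geq^~ y) x && pairwise geq x) &&
    (all (fun z => z <= a.+1) x && (y <= a.+1)).
  by move: pw al; rewrite pairwise_rcons all_rcons => -> /andP[-> ->].
case: y ya ally pw al => [|y] ya ally pw al.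
  by left; apply/mapP; exists x; rewrite ?IHL /is_decseq ?sz ?eqxx ?pwx.
right; apply/mapP; exists (map predn (rcons x y.+1)).
  rewrite IHa /is_decseq size_map size_rcons sz eqxx pairwise_map all_map /=.
  by rewrite (sub_pairwise _ pw) ?(sub_all _ al) // => u v /=; lia.
rewrite -map_comp map_id_in // => z; rewrite mem_rcons inE => /predU1P[-> //|hz] /=.
by have := allP ally z hz; rewrite /=; lia.
Qed.

Lemma uniq_decseqs L a : uniq (decseqs L a).
Proof.
elim: L a => [|L IHL] a //; elim: a => [|a IHa] //.
rewrite decseqsSS cat_uniq map_inj_uniq ?IHL //; last exact: rcons_injl.
rewrite map_inj_uniq ?IHa ?andbT; last exact: inj_map succn_inj.
apply/hasPn => y /mapP[x hx ->]; apply/mapP => -[z _ ez].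
move: hx; rewrite mem_decseqs => /and3P[/eqP sz _ _].
by case: x sz ez => [|x0 x] //= _ /(congr1 (last 0)); rewrite last_rcons /= last_map.
Qed.

Definition ndecseq L a n := count (fun s => sumn s == n) (decseqs L a).

Lemma sumn_mapS s : sumn (map S s) = sumn s + size s.
Proof. by elim: s => //= x s ->; rewrite addnS addSn addnA. Qed.

Lemma ndecseq0 a n : ndecseq 0 a n = (n == 0).
Proof. by rewrite /ndecseq /= addn0 eq_sym. Qed.

Lemma ndecseqS0 L n : ndecseq L.+1 0 n = (n == 0).
Proof. by rewrite /ndecseq /= sumn_nseq mul0n addn0 eq_sym. Qed.

Lemma ndecseqSS L a n : ndecseq L.+1 a.+1 n =
  ndecseq L a.+1 n + (if L.+1 <= n then ndecseq L.+1 a (n - L.+1) else 0).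
Proof.
rewrite /ndecseq decseqsSS count_cat !count_map; congr (_ + _).
  by elim: (decseqs L a.+1) => //= s l ->; rewrite sumn_rcons addn0.
have : all (fun s => size s == L.+1) (decseqs L.+1 a).
  by apply/allP => s; rewrite mem_decseqs => /and3P[].
elim: (decseqs L.+1 a) => [|s l IH] /=; first by case: ifP.
move=> /andP[/eqP sz /IH ->] /=; rewrite sumn_mapS sz.
case: (leqP L.+1 n) => hn /=; last by rewrite (_ : (_ == n) = false) //; apply/eqP; lia.
by congr (nat_of_bool _ + _); apply/eqP/eqP; lia.
Qed.

Lemma le_sumn x s : x \in s -> x <= sumn s.
Proof.
elim: s => //= y s IH; rewrite inE => /predU1P[->|/IH h]; first exact: leq_addr.
exact: leq_trans h (leq_addl _ _).
Qed.

Lemma ndecseq_bound L a b n : n <= a -> n <= b -> ndecseq L a n = ndecseq L b n.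
Proof.
move=> na nb; rewrite /ndecseq -!size_filter.
apply/perm_size/uniq_perm; rewrite ?filter_uniq ?uniq_decseqs // => s.
rewrite !mem_filter !mem_decseqs /is_decseq.
case: eqP => //= sn; case: (size s == L) => //=; case: (pairwise geq s) => //=.
by apply/allP/allP => h y /le_sumn /=; lia.
Qed.

Lemma ndecseq_sum0 L a : ndecseq L a 0 = 1.
Proof. by rewrite (ndecseq_bound L a 0 0) //; case: L => [|L]; rewrite ?ndecseq0 ?ndecseqS0. Qed.

End DecreasingSequences.

(* gauss_poly k a is the Gaussian binomial [a+k choose k]_q. *)
Fixpoint gauss_poly (k : nat) : nat -> {poly int} :=
  match k with
  | 0 => fun _ => 1
  | k'.+1 => fix gauss_polyk a := match a with
        | 0 => 1
        | a'.+1 => gauss_poly k' a'.+1 + 'X^(k'.+1) * gauss_polyk a'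
        end
  end.

Lemma coef1_nat (n : nat) : (1 : {poly int})`_n = (n == 0)%N%:Z.
Proof. by rewrite coef1; case: (n == 0)%N. Qed.

Lemma coef_gauss_poly k a n : (gauss_poly k a)`_n = (ndecseq k a n)%:Z.
Proof.
elim: k a n => [|k IHk] a n; first by rewrite ndecseq0 coef1_nat.
elim: a n => [|a IHa] n; first by rewrite ndecseqS0 coef1_nat.
rewrite /= -/(gauss_poly k.+1 a) coefD IHk coefXnM ndecseqSS PoszD; congr (_ + _).
by case: ltnP; rewrite ?IHa.
Qed.

Lemma qpoch_gauss_poly k a :
  qpoch_fin a * qpoch_fin k * gauss_poly k a = qpoch_fin (a + k).
Proof.
elim: k a => [|k IHk] a; first by rewrite /= addn0 /qpoch_fin big_ord0 !mulr1.
elim: a => [|a IHa]; first by rewrite /= add0n /qpoch_fin big_ord0 !mul1r mulr1.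
rewrite /= -/(gauss_poly k.+1 a).
have -> : qpoch_fin a.+1 * qpoch_fin k.+1 *
      (gauss_poly k a.+1 + 'X^(k.+1) * gauss_poly k.+1 a) =
    (1 - 'X^(k.+1)) * (qpoch_fin a.+1 * qpoch_fin k * gauss_poly k a.+1) +
    'X^(k.+1) * (1 - 'X^(a.+1)) * (qpoch_fin a * qpoch_fin k.+1 * gauss_poly k.+1 a).
  by rewrite (qpoch_finS k) (qpoch_finS a); ring.
rewrite IHk IHa !addSn !addnS (qpoch_finS (a + k).+1).
have <- : 'X^(k.+1) * 'X^(a.+1) = 'X^((a + k).+2) :> {poly int}.
  by rewrite -exprD; congr (_ ^+ _); lia.
ring.
Qed.

(* Truncated generating function of partitions into at most L parts, i.e.
   of 1 / (q;q)_L. *)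
Definition pgf N L : {poly int} := trunc (fun n => (ndecseq L n n)%:Z) N.

Lemma pgf0 N : eqXn N (pgf N 0) 1.
Proof. by move=> i hi; rewrite coef_trunc // ndecseq0 coef1_nat. Qed.

Lemma pgfS N L : eqXn N ((1 - 'X^(L.+1)) * pgf N L.+1) (pgf N L).
Proof.
move=> i hi; rewrite mulrBl mul1r coefB coefXnM !coef_trunc //; last first.
  by apply: leq_ltn_trans hi; rewrite leq_subr.
case: i hi => [|i] hi; first by rewrite !ndecseq_sum0.
rewrite ndecseqSS PoszD; case: (ltnP i.+1 L.+1) => hL; first by rewrite addr0 subr0.
by rewrite (ndecseq_bound L.+1 i (i.+1 - L.+1) (i.+1 - L.+1)) ?addrK //; lia.
Qed.

Lemma qpoch_fin_pgf N L : eqXn N (qpoch_fin L * pgf N L) 1.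
Proof.
elim: L => [|L IH]; first by rewrite /qpoch_fin big_ord0 mul1r; apply: pgf0.
by rewrite qpoch_finS -mulrA; apply: eqXn_trans (eqXnMl _ (pgfS N L)) IH.
Qed.

Lemma gauss_poly_pgf N a k :
  eqXn N (qpoch_fin a * gauss_poly k a * pgf N (a + k)) (pgf N k).
Proof.
apply: (eqXn_inv_uniq (u := qpoch_fin k)); last exact: qpoch_fin_pgf.
have -> : qpoch_fin k * (qpoch_fin a * gauss_poly k a * pgf N (a + k)) =
    qpoch_fin a * qpoch_fin k * gauss_poly k a * pgf N (a + k) by ring.
by rewrite qpoch_gauss_poly; apply: qpoch_fin_pgf.
Qed.

Definition euler_sum N m : {poly int} := \sum_(k < N) 'X^(k * m.+1) * pgf N k.

Lemma euler_sum_diff N m :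
  eqXn N (euler_sum N m - euler_sum N m.+1) ('X^(m.+1) * euler_sum N m).
Proof.
case: N => [|N]; first by []; rewrite /euler_sum -sumrB.
rewrite (eq_bigr (fun i : 'I_N.+1 => 'X^(i * m.+1) * ((1 - 'X^i) * pgf N.+1 i))); last first.
  by move=> i _; rewrite (mulnS i m.+1) exprD; ring.
rewrite big_ord_recl expr0 subrr mul0r mulr0 add0r.
rewrite [\sum_(k < N.+1) _]big_ord_recr /= mulrDr mulr_sumr.
rewrite -[X in eqXn _ X _]addr0; apply: eqXnD.
  apply: eqXn_sum => i _; rewrite mulrA -exprD.
  have -> : (bump 0 i * m.+1 = m.+1 + i * m.+1)%N by rewrite /bump /=; lia.
  exact/eqXnMl/pgfS.
by apply/eqXn_sym; rewrite mulrA -exprD; apply: eqXn_mulXn0; lia.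
Qed.

Lemma euler_sumS N m : eqXn N ((1 - 'X^(m.+1)) * euler_sum N m) (euler_sum N m.+1).
Proof.
have -> : euler_sum N m.+1 = euler_sum N m - (euler_sum N m - euler_sum N m.+1) by ring.
by rewrite mulrBl mul1r; apply/eqXnB/eqXn_sym/euler_sum_diff.
Qed.

Lemma qpoch_euler_sum_shift N m M :
  eqXn N (qpoch m.+1 M * euler_sum N m) (euler_sum N (m + M)).
Proof.
elim: M m => [|M IH] m; first by rewrite /qpoch big_ord0 mul1r addn0.
rewrite -[M.+1]add1n qpochD addn1 /qpoch big_ord1 addn0 -/(qpoch _ M).
rewrite [_ * qpoch _ _]mulrC -mulrA add1n addnS -addSn.
exact: eqXn_trans (eqXnMl _ (euler_sumS N m)) (IH m.+1).
Qed.

Lemma euler_sum_large N m : (N <= m)%N -> eqXn N (euler_sum N m) 1.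
Proof.
case: N => [|N] Nm; first by [].
rewrite /euler_sum big_ord_recl mul1r -[X in eqXn _ _ X]addr0.
apply: eqXnD; first exact: pgf0.
move=> i hi; rewrite coef_sum coef0 big1 // => j _.
by rewrite (eqXn_mulXn0 _ _ _ _ _ hi) ?coef0 // lift0 mulSn; lia.
Qed.

Lemma qpoch_euler_sum N m : eqXn N (qpoch m.+1 N * euler_sum N m) 1.
Proof. exact: eqXn_trans (qpoch_euler_sum_shift N m N) (euler_sum_large _ _ (leq_addl _ _)). Qed.

Section Convolution.
Local Open Scope nat_scope.

Lemma sum_count (X : Type) (s : seq X) (P : pred X) : \sum_(x <- s) P x = count P s.
Proof. by elim: s => [|x s IH]; rewrite ?big_nil ?big_cons ?IH. Qed.

Lemma sum_pairs_conv (X Y : Type) (A : seq X) (B : seq Y) (a : X -> nat) (b : Y -> nat) r :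
  \sum_(x <- A) \sum_(y <- B) (a x + b y == r) =
  \sum_(j < r.+1) count (fun x => a x == j) A * count (fun y => b y == r - j) B.
Proof.
have row x : \sum_(y <- B) (a x + b y == r) =
    \sum_(j < r.+1) (a x == j) * count (fun y => b y == r - j) B.
  case: (leqP (a x) r) => axr.
    rewrite [RHS](bigD1 (@Ordinal r.+1 (a x) axr)) //= eqxx mul1n.
    rewrite [X in _ = _ + X]big1 ?addn0 => [|j hj]; last first.
      by rewrite (_ : (a x == j) = false) //; apply: contraNF hj => /eqP e; apply/eqP/val_inj.
    by rewrite -sum_count; apply: eq_bigr => y _; congr nat_of_bool; apply/eqP/eqP; lia.
  rewrite !big1 // => [j _|y _]; last by rewrite (_ : (_ == r) = false) //; apply/eqP; lia.
  by rewrite (_ : (a x == j) = false) //; apply/eqP; have := ltn_ord j; lia.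
rewrite (eq_bigr _ (fun x _ => row x)) exchange_big /=.
by apply: eq_bigr => j _; rewrite -big_distrl /= sum_count.
Qed.

End Convolution.

Section HookCounts.
Local Open Scope nat_scope.

(* The size of the smallest partition with [hook_at T k]: T+k parts T+1 above
   the hook row, the part T+1 itself, and k parts 1 below it. *)
Definition hook_base T k := T.+1 * (T.+1 + k) + k.

Definition nhook T k n := \sum_(u <- decseqs (T + k) n) \sum_(v <- decseqs k T)
  (sumn u + sumn v + hook_base T k == n).

Lemma nhook_conv T k n : hook_base T k <= n ->
  nhook T k n = \sum_(j < (n - hook_base T k).+1)
                  ndecseq (T + k) j j * ndecseq k T (n - hook_base T k - j).
Proof.
move=> bn; rewrite /nhook.
have e u v : (sumn u + sumn v + hook_base T k == n) = (sumn u + sumn v == n - hook_base T k).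
  by apply/eqP/eqP; lia.
under eq_bigr => u _ do under eq_bigr => v _ do rewrite e.
rewrite sum_pairs_conv; apply: eq_bigr => j _; congr (_ * _).
by rewrite (ndecseq_bound (T + k) j n j) //; have := ltn_ord j; lia.
Qed.

Definition nhooks T n := \sum_(k < n.+1) nhook T k n.

End HookCounts.

Lemma Posz_sum (I : Type) (r : seq I) (P : pred I) (F : I -> nat) :
  (\sum_(i <- r | P i) F i)%N%:Z = \sum_(i <- r | P i) (F i)%:Z.
Proof. exact: (big_morph Posz PoszD (erefl _)). Qed.

Lemma coef_nhook T k N n : (n < N)%N ->
  (nhook T k n)%:Z = ('X^(hook_base T k) * (pgf N (T + k) * gauss_poly k T))`_n.
Proof.
move=> nN; rewrite coefXnM; case: ltnP => bn.
  rewrite /nhook big1 // => u _; rewrite big1 // => v _.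
  by rewrite (_ : (_ == n) = false) //; apply/eqP; lia.
rewrite nhook_conv // Posz_sum coefM; apply: eq_bigr => j _.
by rewrite PoszM coef_trunc ?coef_gauss_poly //; have := ltn_ord j; lia.
Qed.

Lemma trunc_nhooks T N : eqXn N (qpoch_fin T * trunc (fun n => (nhooks T n)%:Z) N)
  ('X^(T.+1 ^ 2) * euler_sum N T.+1).
Proof.
pose S := \sum_(k < N) 'X^(hook_base T k) * (pgf N (T + k) * gauss_poly k T).
have -> : trunc (fun n => (nhooks T n)%:Z) N = trunc (fun n => S`_n) N.
  apply/polyP => n; rewrite !coef_poly; case: ltnP => // nN.
  rewrite Posz_sum coef_sum (big_ord_widen N (fun k => (nhook T k n)%:Z) nN) big_mkcond /=.
  apply: eq_bigr => k _; case: ltnP => kn; first by rewrite (coef_nhook _ _ _ _ nN).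
  by rewrite coefXnM ifT // /hook_base; nia.
apply: eqXn_trans (eqXnMl _ (trunc_fps_of_poly S N)) _.
rewrite /S /euler_sum !mulr_sumr; apply: eqXn_sum => k _.
have -> : qpoch_fin T * ('X^(hook_base T k) * (pgf N (T + k) * gauss_poly k T)) =
    'X^(T.+1 ^ 2) * 'X^(k * T.+2) * (qpoch_fin T * gauss_poly k T * pgf N (T + k)).
  by rewrite -exprD (_ : hook_base T k = T.+1 ^ 2 + k * T.+2)%N; [ring | rewrite /hook_base; lia].
by rewrite -mulrA; apply/eqXnMl/eqXnMl/gauss_poly_pgf.
Qed.

Lemma qpoch_nhooks T N :
  eqXn N (qpoch_fin T * qpoch T.+2 N * trunc (fun n => (nhooks T n)%:Z) N) 'X^(T.+1 ^ 2).
Proof.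
rewrite mulrAC mulrC; apply: eqXn_trans (eqXnMl _ (trunc_nhooks T N)) _.
by rewrite mulrCA -[X in eqXn _ _ X]mulr1; apply/eqXnMl/qpoch_euler_sum.
Qed.

Section Partitions.
Local Open Scope nat_scope.

(* The fixed hook of a partition with t parts sits in row i = T+k+1 with part
   T+1 there: h_(i,1) = i forces t = 2i - (T+1) = T+1+2k. *)
Definition hook_at T k (s : seq nat) :=
  (size s == T.+1 + k + k) && (nth 0 s (T + k) == T.+1).

Lemma nth_pairwise_geq (s : seq nat) i j :
  pairwise geq s -> i <= j -> j < size s -> nth 0 s j <= nth 0 s i.
Proof.
move=> /(pairwiseP 0) h; rewrite leq_eqVlt => /predU1P[-> //|ij] js.
exact: h (ltn_trans ij js) js ij.
Qed.

Lemma size_le_sumn s : all (fun x => 0 < x) s -> size s <= sumn s.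
Proof. by elim: s => //= x s IH /andP[x0 /IH]; lia. Qed.

Lemma hook_at_has_fixed_hook T k s : hook_at T k s -> has_fixed_hook s.
Proof.
move=> /andP[/eqP sz /eqP hn]; apply/hasP; exists (T + k).
  by rewrite mem_iota add0n; lia.
by rewrite /hook1 hn; apply/eqP; lia.
Qed.

Lemma has_fixed_hookE s : all (fun x => 0 < x) s ->
  has_fixed_hook s = [exists T : 'I_(sumn s).+1, exists k : 'I_(sumn s).+1, hook_at T k s].
Proof.
move=> pos; apply/hasP/existsP.
  move=> [j]; rewrite mem_iota add0n => /andP[_ js]; rewrite /hook1 => /eqP h.
  have mpos : 0 < nth 0 s j by apply: (allP pos) _ (mem_nth 0 js).
  have mle : nth 0 s j <= sumn s by apply: le_sumn (mem_nth 0 js).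
  have sz := size_le_sumn s pos.
  have hT : (nth 0 s j).-1 < (sumn s).+1 by lia.
  have hk : size s - j.+1 < (sumn s).+1 by lia.
  exists (Ordinal hT); apply/existsP; exists (Ordinal hk); rewrite /hook_at /=.
  have -> : (nth 0 s j).-1 + (size s - j.+1) = j by lia.
  by apply/andP; split; apply/eqP; lia.
by move=> [T /existsP[k /hook_at_has_fixed_hook /hasP]].
Qed.

Lemma hook_at_uniq s T k T' k' : pairwise geq s ->
  hook_at T k s -> hook_at T' k' s -> T = T' /\ k = k'.
Proof.
move=> pw; wlog le : T k T' k' / T + k <= T' + k'.
  move=> W h h'; case: (leqP (T + k) (T' + k')) => c; first exact: W.
  by have [-> ->] := W _ _ _ _ (ltnW c) h' h.
move=> /andP[/eqP sz /eqP hn] /andP[/eqP sz' /eqP hn'].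
have := nth_pairwise_geq _ _ _ pw le; rewrite hn hn' => /(_ ltac:(lia)); lia.
Qed.

Lemma sorted_geq s : sorted geq s = pairwise geq s.
Proof. by apply: sorted_pairwise => a b c h1 h2; apply: leq_trans h2 h1. Qed.

Definition vals n (t : n.-tuple 'I_n.+1) : seq nat := [seq (val x : nat) | x <- t].
Arguments vals {n}.

Lemma pairwise_geq_split (s : seq nat) : pairwise geq s ->
  s = filter (fun x => 0 < x) s ++ nseq (count (fun x => x == 0) s) 0.
Proof.
elim: s => //= x s IH /andP[hx pw]; case: x hx => [|x] hx /=; last by rewrite add0n -IH.
have /all_pred1P -> : all (pred1 0) s by apply: sub_all hx => y /=; rewrite leqn0.
by rewrite count_nseq filter_nseq /= mul1n.
Qed.

Lemma positive_parts_inj n (t1 t2 : n.-tuple 'I_n.+1) :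
  pairwise geq (vals t1) -> pairwise geq (vals t2) ->
  positive_parts t1 = positive_parts t2 -> t1 = t2.
Proof.
move=> p1 p2 e; apply/val_inj/(inj_map val_inj); change (vals t1 = vals t2).
have sz : size (vals t1) = size (vals t2) by rewrite !size_map !size_tuple.
have e' : filter (fun x => 0 < x) (vals t1) = filter (fun x => 0 < x) (vals t2) := e.
rewrite (pairwise_geq_split _ p1) (pairwise_geq_split _ p2) e' in sz *.
by move: sz; rewrite !size_cat !size_nseq => /addnI ->.
Qed.

Lemma positive_parts_surj n (s : seq nat) : is_partition n s ->
  exists t : n.-tuple 'I_n.+1, pairwise geq (vals t) /\ positive_parts t = s.
Proof.
move=> /and3P[so pos /eqP sm]; rewrite sorted_geq in so.
have szn : size s <= n by rewrite -sm; apply: size_le_sumn.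
exists [tuple inord (nth 0 s i) | i < n].
have ev : vals [tuple inord (nth 0 s i) | i < n] = s ++ nseq (n - size s) 0.
  apply: (@eq_from_nth _ 0); first by rewrite size_map size_tuple size_cat size_nseq; lia.
  move=> i; rewrite size_map size_tuple => hi.
  rewrite (nth_map (inord 0)) ?size_tuple // -(tnth_nth _ _ (Ordinal hi)) tnth_mktuple /=.
  rewrite nth_cat nth_nseq if_same; case: ltnP => [lt_is|ge_is]; last by rewrite nth_default ?inordK.
  by rewrite inordK // ltnS -sm; apply/le_sumn/mem_nth.
rewrite /positive_parts -/(vals _) ev; split.
  by rewrite pairwise_cat so pairwise_nseq !andbT; apply/allrelP => x y _ /nseqP[->].
by rewrite filter_cat filter_nseq ltnn mul0n cats0; apply/all_filterP.
Qed.

Definition build T (u v : seq nat) := map (addn T.+1) u ++ T.+1 :: map S v.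

Lemma sumn_map_add m s : sumn (map (addn m) s) = m * size s + sumn s.
Proof. by elim: s => [|x s IH] /=; rewrite ?muln0 // IH mulnS; lia. Qed.

Lemma build_hook_at T k n u v : u \in decseqs (T + k) n -> v \in decseqs k T ->
  sumn u + sumn v + hook_base T k = n ->
  is_partition n (build T u v) && hook_at T k (build T u v).
Proof.
rewrite !mem_decseqs /is_decseq => /and3P[/eqP su pu au] /and3P[/eqP sv pv av] hs.
apply/andP; split; last first.
  rewrite /hook_at /build size_cat /= !size_map su sv nth_cat size_map su ltnn subnn /=.
  by rewrite !eqxx; apply/eqP; lia.
apply/and3P; split.
- rewrite sorted_geq /build pairwise_cat; apply/and3P; split.
  + apply/allrelP => x y /mapP[a _ ->]; rewrite inE => /orP[/eqP->|/mapP[b hb ->]] /=.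
      exact: leq_addr.
    have := allP av b hb; lia.
  + by rewrite pairwise_map; apply: sub_pairwise pu => a b /=; lia.
  + rewrite /= pairwise_map all_map; apply/andP; split; last exact: pv.
    apply/allP => b hb /=; have := allP av b hb; lia.
- rewrite /build all_cat all_map /=; apply/andP; split.
    by apply/allP => a _ /=; lia.
  by rewrite all_map; apply/allP => a _.
- rewrite /build sumn_cat /= sumn_mapS sumn_map_add su sv -hs /hook_base; apply/eqP; nia.
Qed.

Lemma hook_at_build T k n s : is_partition n s -> hook_at T k s ->
  exists u v, [/\ u \in decseqs (T + k) n, v \in decseqs k T,
     sumn u + sumn v + hook_base T k = n & s = build T u v].
Proof.
move=> /and3P[so pos /eqP sm] /andP[/eqP sz /eqP hn]; rewrite sorted_geq in so.
set top := take (T + k) s; set bot := drop (T + k).+1 s.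
have es : s = top ++ T.+1 :: bot by rewrite -hn -drop_nth ?cat_take_drop //; lia.
move: (so); rewrite {1}es pairwise_cat /= => /and3P[ar pt /andP[ad pd]].
have geT x : x \in top -> T.+1 <= x.
  by move=> hx; have := allrelP ar x T.+1 hx; rewrite inE eqxx => /(_ isT).
have posd x : x \in bot -> 0 < x.
  by move=> hx; apply: (allP pos); rewrite es mem_cat inE hx !orbT.
have Etop : map (addn T.+1) (map (subn^~ T.+1) top) = top.
  by rewrite -map_comp map_id_in // => x /geT /=; lia.
have Ebot : map S (map predn bot) = bot.
  by rewrite -map_comp map_id_in // => x /posd /=; lia.
have size_top : size top = T + k by rewrite size_takel //; lia.
have size_bot : size bot = k by rewrite size_drop sz; lia.
exists (map (subn^~ T.+1) top), (map predn bot); split.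
- rewrite mem_decseqs /is_decseq size_map size_top eqxx pairwise_map all_map.
  rewrite (sub_pairwise _ pt) => [|a b /=]; last lia.
  by apply/allP => x hx /=; have := le_sumn x s; rewrite sm es mem_cat hx => /(_ isT); lia.
- rewrite mem_decseqs /is_decseq size_map size_bot eqxx pairwise_map all_map.
  rewrite (sub_pairwise _ pd) => [|a b /=]; last lia.
  by apply/allP => x /(allP ad) /=; lia.
- move: sm; rewrite {1}es -{1}Etop -{1}Ebot sumn_cat /= sumn_map_add sumn_mapS.
  by rewrite !size_map size_top size_bot /hook_base; lia.
- by rewrite {1}es /build Etop Ebot.
Qed.

Lemma count_allpairs (X Y : Type) (A : seq X) (B : seq Y) (P : pred (X * Y)) :
  count P [seq (x, y) | x <- A, y <- B] = \sum_(x <- A) \sum_(y <- B) P (x, y).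
Proof.
elim: A => [|x A IH]; first by rewrite big_nil.
by rewrite /= count_cat IH big_cons count_map -sum_count.
Qed.

Lemma card_eq_size (X : finType) (Y Z : eqType) (S : {set X}) (phi : X -> Y)
    (M : seq Z) (g : Z -> Y) :
  {in S &, injective phi} -> uniq M -> {in M &, injective g} ->
  (forall y, (exists2 x, x \in S & phi x = y) <-> (exists2 z, z \in M & g z = y)) ->
  #|S| = size M.
Proof.
move=> phi_inj uM g_inj same_img; rewrite cardE -(size_map phi) -(size_map g M).
apply/perm_size/uniq_perm.
- by rewrite map_inj_in_uniq ?enum_uniq // => x1 x2; rewrite !mem_enum; apply: phi_inj.
- by rewrite map_inj_in_uniq.
move=> y; apply/mapP/mapP => -[x hx ->].
  have [z hz ez] : exists2 z, z \in M & g z = phi x.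
    by apply/same_img; exists x; rewrite // -mem_enum.
  by exists z.
have [x' hx' ex] : exists2 x', x' \in S & phi x' = g x by apply/same_img; exists x.
by exists x'; rewrite ?mem_enum.
Qed.

Section FixedHookTuples.
Variable n : nat.

Definition hook_tuples T k := [set t : n.-tuple 'I_n.+1 |
  [&& sorted geq (vals t), is_partition n (positive_parts t) & hook_at T k (positive_parts t)]].

Definition hook_pairs T k :=
  [seq p <- [seq (u, v) | u <- decseqs (T + k) n, v <- decseqs k T] |
     sumn p.1 + sumn p.2 + hook_base T k == n].

Lemma card_hook_tuples T k : #|hook_tuples T k| = nhook T k n.
Proof.
have -> : nhook T k n = size (hook_pairs T k) by rewrite size_filter count_allpairs.
apply: (card_eq_size _ _ _ _ (@positive_parts n) _ (fun p => build T p.1 p.2)).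
- move=> t1 t2; rewrite !inE => /and3P[s1 _ _] /and3P[s2 _ _].
  by apply: positive_parts_inj; rewrite -sorted_geq.
- rewrite filter_uniq // allpairs_uniq ?uniq_decseqs //.
  by move=> [a b] [c d] _ _ /= [-> ->].
- move=> [u v] [u' v']; rewrite !mem_filter /= => /andP[_ /allpairsP[[a b] [ha hb [ea eb]]]].
  move=> /andP[_ /allpairsP[[c d] [hc hd [ec ed]]]] /=; subst.
  move: ha hc; rewrite !mem_decseqs => /and3P[/eqP sa _ _] /and3P[/eqP sc _ _].
  rewrite /build => /eqP; rewrite eqseq_cat ?size_map ?sa ?sc // => /andP[/eqP e1 /eqP [e2]].
  by rewrite (inj_map (@addnI T.+1) e1) (inj_map succn_inj e2).
move=> s; split.
  move=> [t]; rewrite inE => /and3P[_ hp hh] <-.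
  have [u [v [hu hv hs ->]]] := hook_at_build _ _ _ _ hp hh.
  by exists (u, v); rewrite // mem_filter /= hs eqxx; apply/allpairsP; exists (u, v).
move=> [[u v]]; rewrite mem_filter => /andP[/eqP hs /allpairsP[[a b] [ha hb /= [ea eb]]]] <-.
subst a b.
have /andP[hp hh] := build_hook_at _ _ _ _ _ ha hb hs.
have [t [pt et]] := positive_parts_surj _ _ hp.
by exists t; rewrite ?inE et ?hp ?hh ?sorted_geq ?pt.
Qed.

Lemma sum_pair_unique N (P : nat -> nat -> bool) T0 k0 :
  T0 < N -> k0 < N -> P T0 k0 -> (forall T k, P T k -> T = T0 /\ k = k0) ->
  \sum_(T < N) \sum_(k < N) P T k = 1.
Proof.
move=> hT hk p0 u.
rewrite (bigD1 (Ordinal hT)) //= [X in _ + X]big1 ?addn0 => [|T hT'].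
  rewrite (bigD1 (Ordinal hk)) //= p0 big1 // => k hk'.
  by case: (boolP (P T0 k)) => // /u [_ e]; case/eqP: hk'; apply: val_inj.
apply: big1 => k _; case: (boolP (P T k)) => // /u [e _].
by case/eqP: hT'; apply: val_inj.
Qed.

Lemma fixed_hook_sum_hook_tuples t :
  [&& sorted geq (vals t), is_partition n (positive_parts t) & has_fixed_hook (positive_parts t)]
  = \sum_(T < n.+1) \sum_(k < n.+1) (t \in hook_tuples T k) :> nat.
Proof.
case: (boolP [&& _, _ & _]) => [/and3P[so hp hf]|hA].
  have /and3P[pw pos /eqP sm] := hp; rewrite sorted_geq in pw.
  move: hf; rewrite has_fixed_hookE // => /existsP[T0 /existsP[k0 h0]].
  have ltn_ord_n (i : 'I_(sumn (positive_parts t)).+1) : i < n.+1 by rewrite -{2}sm.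
  symmetry; apply: (sum_pair_unique _ (fun T k => t \in hook_tuples T k) T0 k0).
  - exact: ltn_ord_n.
  - exact: ltn_ord_n.
  - by rewrite inE so hp.
  by move=> T k; rewrite inE => /and3P[_ _ h]; apply: hook_at_uniq pw h h0.
symmetry; apply: big1 => T _; apply: big1 => k _; apply/eqP; rewrite eqb0; apply: contra hA.
by rewrite inE => /and3P[-> -> /hook_at_has_fixed_hook ->].
Qed.

Lemma f_sum_nhooks : f n = \sum_(T < n.+1) nhooks T n.
Proof.
rewrite /f -sum1_card big_mkcond /=.
rewrite (eq_bigr (fun t => \sum_(T < n.+1) \sum_(k < n.+1) (t \in hook_tuples T k))); last first.
  by move=> t _; rewrite inE -fixed_hook_sum_hook_tuples; case: (_ && _).
rewrite exchange_big /=; apply: eq_bigr => T _; rewrite exchange_big /= /nhooks.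
apply: eq_bigr => k _; rewrite -card_hook_tuples -sum1_card [RHS]big_mkcond /=.
by apply: eq_bigr => t _; case: (t \in _).
Qed.

End FixedHookTuples.

End Partitions.

Theorem mainTheorem2 :
  forall n : nat, (f n)%:Z = fsum term1 n /\ fsum term1 n = fsum term2 n.
Proof.
move=> n.
have terms_nhooks T : term1 T n = (nhooks T n)%:Z /\ term2 T n = (nhooks T n)%:Z.
  have hc := qpoch_nhooks T n.+1.
  by rewrite (term1_coef _ _ _ _ hc) ?(term2_coef _ _ _ _ hc) ?coef_trunc.
split; last by apply: eq_bigr => T _; have [-> ->] := terms_nhooks T.
by rewrite f_sum_nhooks Posz_sum; apply: eq_bigr => T _; have [-> _] := terms_nhooks T.
Qed.
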